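(* Let $\mathbf{E}\subseteq\mathbf{A}$ be finite symmetric integral relation algebras such that $\mathbf{A}$ is a special extension of $\mathbf{E}$. For every $n\in\omega$, the set $$B_n=\{1'\}\cup\{x^{(i)}:x\text{ a diversity atom of }\mathbf{A},\ i<n\}\cup\{J(a,n):a\text{ a diversity atom of }\mathbf{E}\}$$ is the set of atoms of a subalgebra of $\mathbf{C}_{\mathbf{E}}(\mathbf{A})$.
   Context: Relation algebras are in the sense of Tarski; $1'$ identity, $0'$ its complement, $;$ relative product; integral: $1'$ is an atom; symmetric: $x^{\smile}=x$; a diversity atom is an atom below $0'$. Special extension: $\mathbf{A}$ is a special extension of $\mathbf{E}$ if for all diversity atoms $a,b,c$ of $\mathbf{E}$: (1) if not $a=b=c$ and $a;b\ge c$, then $x;y\ge c$ whenever $x,y$ are atoms of $\mathbf{A}$ with $x\le a$, $y\le b$; (2) if $a;a\ge a$ then $x;y\cdot a\ne0$ whenever $x,y$ are atoms of $\mathbf{A}$ below $a$. The algebra $\mathbf{C}_{\mathbf{E}}(\mathbf{A})$: for each atom $x$ of $\mathbf{A}$ let $c(x)$ be the atom of $\mathbf{E}$ with $x\le c(x)$; $T(i,j,k)$ iff $(i\le j=k)$ or $(j\le k=i)$ or $(k\le i=j)$. Atoms: $1'$ and $x^{(i)}$ for diversity atoms $x$ of $\mathbf{A}$ and $i\in\omega$. $C$ is the set of all permutations of $(1',1',1')$, $(1',x^{(i)},x^{(i)})$, and $(x^{(i)},y^{(j)},z^{(k)})$ with $x;y\ge z$ in $\mathbf{A}$ and ($c(x)=c(y)=c(z)\Rightarrow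 T(i,j,k)$). $\mathbf{C}_{\mathbf{E}}(\mathbf{A})$ is the algebra of all sets of atoms with set Boolean operations, identity $\{1'\}$, converse the identity map, and $X;Y=\{w:\exists u\in X,\exists v\in Y,(u,v,w)\in C\}$. For $a\in\mathbf{A}$ and $n\in\omega$, $J(a,n)$ is the join of all $x^{(i)}$ with $x$ a diversity atom of $\mathbf{A}$, $x\le a$, $n\le i$, together with $1'$ if $1'\le a$. *)

From mathcomp Require Import all_boot.
Set Implicit Arguments. Unset Strict Implicit. Unset Printing Implicit Defensive.

Record ra_ops (T : Type) := RAOps {
  ra_join  : T -> T -> T;
  ra_compl : T -> T;
  ra_comp  : T -> T -> T;
  ra_conv  : T -> T;
  ra_id    : T
}.

Section RA.
Variable T : Type.
Variable o : ra_ops T.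
Local Notation "x + y" := (ra_join o x y).
Local Notation "- x" := (ra_compl o x).
Local Notation "x ; y" := (ra_comp o x y) (at level 40, left associativity).
Local Notation "x ^c" := (ra_conv o x) (at level 2).

Definition is_RA : Prop :=
  (forall x y, x + y = y + x) /\
  (forall x y z, x + (y + z) = (x + y) + z) /\
  (forall x y, - (- x + y) + - (- x + - y) = x) /\
  (forall x y z, x ; (y ; z) = (x ; y) ; z) /\
  (forall x y z, (x + y) ; z = (x ; z) + (y ; z)) /\
  (forall x, x ; ra_id o = x) /\
  (forall x, x^c^c = x) /\
  (forall x y, (x + y)^c = x^c + y^c) /\
  (forall x y, (x ; y)^c = y^c ; x^c) /\
  (forall x y, (x^c ; - (x ; y)) + - y = - y).

Definition ra_meet (x y : T) : T := - (- x + - y).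
Definition ra_top : T := ra_id o + - ra_id o.
Definition ra_zero : T := - ra_top.
Definition ra_diversity : T := - ra_id o.

Definition ra_symmetric : Prop := forall x, x^c = x.
End RA.

Section FinRA.
Variable T : finType.
Variable o : ra_ops T.

Definition ra_le (x y : T) : bool := ra_join o x y == y.

Definition ra_atom (x : T) : bool :=
  (x != ra_zero o) && [forall y, ra_le y x ==> (y == ra_zero o) || (y == x)].

Definition ra_integral : Prop := ra_atom (ra_id o).

Definition ra_datom (x : T) : bool := ra_atom x && ra_le x (ra_diversity o).

Definition ra_subalg (E : {pred T}) : Prop :=
  (forall x y, E x -> E y -> E (ra_join o x y)) /\
  (forall x, E x -> E (ra_compl o x)) /\
  (forall x y, E x -> E y -> E (ra_comp o x y)) /\
  (forall x, E x -> E (ra_conv o x)) /\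
  E (ra_id o).

Definition sub_atom (E : {pred T}) (e : T) : bool :=
  E e && (e != ra_zero o) &&
  [forall y, (E y && ra_le y e) ==> (y == ra_zero o) || (y == e)].

Definition sub_datom (E : {pred T}) (e : T) : bool :=
  sub_atom E e && ra_le e (ra_diversity o).

Definition sub_integral (E : {pred T}) : Prop := sub_atom E (ra_id o).

Definition special_extension (E : {pred T}) : Prop :=
  (forall a b c, sub_datom E a -> sub_datom E b -> sub_datom E c ->
     ~ (a = b /\ b = c) -> ra_le c (ra_comp o a b) ->
     forall x y, ra_atom x -> ra_atom y -> ra_le x a -> ra_le y b ->
       ra_le c (ra_comp o x y)) /\
  (forall a, sub_datom E a -> ra_le a (ra_comp o a a) ->
     forall x y, ra_atom x -> ra_atom y -> ra_le x a -> ra_le y a ->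
       ra_meet o (ra_comp o x y) a <> ra_zero o).

Definition catom_of (E : {pred T}) (x : T) : option T :=
  [pick e | sub_atom E e && ra_le x e].

Definition datomA := {x : T | ra_datom x}.

(** atoms of C_E(A): None is 1', Some (x, i) is x^(i) *)
Definition Catom := option (datomA * nat).

Definition Tidx (i j k : nat) : Prop :=
  (i <= j /\ j = k) \/ (j <= k /\ k = i) \/ (k <= i /\ i = j).

Definition Cbase (E : {pred T}) (u v w : Catom) : Prop :=
  match u, v, w with
  | None, None, None => True
  | None, Some (x, i), Some (y, j) => x = y /\ i = j
  | Some (x, i), Some (y, j), Some (z, k) =>
      ra_le (val z) (ra_comp o (val x) (val y)) /\
      ((catom_of E (val x) = catom_of E (val y) /\
        catom_of E (val y) = catom_of E (val z)) -> Tidx i j k)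
  | _, _, _ => False
  end.

Definition Ccycle (E : {pred T}) (u v w : Catom) : Prop :=
  Cbase E u v w \/ Cbase E u w v \/ Cbase E v u w \/
  Cbase E v w u \/ Cbase E w u v \/ Cbase E w v u.

Definition Celt := Catom -> Prop.

Definition C_join (X Y : Celt) : Celt := fun w => X w \/ Y w.
Definition C_compl (X : Celt) : Celt := fun w => ~ X w.
Definition C_zero : Celt := fun _ => False.
Definition C_id : Celt := fun w => w = None.
Definition C_conv (X : Celt) : Celt := X.
Definition C_comp (E : {pred T}) (X Y : Celt) : Celt :=
  fun w => exists u v, X u /\ Y v /\ Ccycle E u v w.

Definition C_le (X Y : Celt) : Prop := forall w, X w -> Y w.

Definition C_subalg (E : {pred T}) (S : Celt -> Prop) : Prop :=
  S C_zero /\ S C_id /\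
  (forall X Y, S X -> S Y -> S (C_join X Y)) /\
  (forall X, S X -> S (C_compl X)) /\
  (forall X, S X -> S (C_conv X)) /\
  (forall X Y, S X -> S Y -> S (C_comp E X Y)).

Definition C_sub_atom (S : Celt -> Prop) (X : Celt) : Prop :=
  S X /\ X <> C_zero /\
  forall Y, S Y -> C_le Y X -> Y = C_zero \/ Y = X.

Definition J (a : T) (n : nat) : Celt :=
  fun w => match w with
           | None => ra_le (ra_id o) a
           | Some (x, i) => ra_le (val x) a /\ n <= i
           end.

Definition Bn (E : {pred T}) (n : nat) (X : Celt) : Prop :=
  X = C_id \/
  (exists (x : datomA) (i : nat), i < n /\ X = (fun w => w = Some (x, i))) \/
  (exists a, sub_datom E a /\ X = J a n).
End FinRA.

Arguments ra_le {T} o x y.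
Arguments ra_atom {T} o x.
Arguments ra_integral {T} o.
Arguments ra_datom {T} o x.
Arguments ra_subalg {T} o E.
Arguments sub_atom {T} o E e.
Arguments sub_datom {T} o E e.
Arguments sub_integral {T} o E.
Arguments special_extension {T} o E.
Arguments catom_of {T} o E x.
Arguments datomA {T} o.
Arguments Catom {T} o.
Arguments Cbase {T} o E u v w.
Arguments Ccycle {T} o E u v w.
Arguments Celt {T} o.
Arguments C_join {T o} X Y.
Arguments C_compl {T o} X.
Arguments C_zero {T o}.
Arguments C_id {T o}.
Arguments C_conv {T o} X.
Arguments C_comp {T} o E X Y.
Arguments C_le {T o} X Y.
Arguments C_subalg {T} o E S.
Arguments C_sub_atom {T} o S X.
Arguments J {T} o a n.
Arguments Bn {T} o E n X.

(* The subalgebra consists of the sets X of atoms that are saturated: for every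
   diversity atom c of E, X contains either all or none of J(c, n).  For relative
   products, let (u, v, w) be a cycle with w in J(c, n) and let w' be another
   element of J(c, n).  If u, v, w are not all of colour c, condition (1) of a
   special extension shows that (u, v, w') is again a cycle.  If they all have
   colour c, the index condition T and n <= index(w) force u or v into J(c, n);
   condition (2) then yields a partner in J(c, n) completing a cycle through w'.
   The atoms of the algebra of saturated sets are the singletons outside the
   J(c, n) together with the J(c, n) themselves, that is, B_n. *)

From Stdlib Require Import Classical FunctionalExtensionality PropExtensionality Lia.
From mathcomp Require Import zify all_boot.
Set Implicit Arguments. Unset Strict Implicit. Unset Printing Implicit Defensive.

Section BooleanReduct.
Variables (T : finType) (o : ra_ops T).
Hypothesis HRA : is_RA o.
Local Notation join := (ra_join o).
Local Notation compl := (ra_compl o).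
Local Notation meet := (ra_meet o).
Local Notation le := (ra_le o).
Local Notation top := (ra_top o).
Local Notation zero := (ra_zero o).

Lemma ra_joinC x y : join x y = join y x. Proof. by case: HRA. Qed.

Lemma ra_joinA x y z : join x (join y z) = join (join x y) z.
Proof. by case: HRA => _ []. Qed.

Lemma ra_huntington x y :
  join (compl (join (compl x) y)) (compl (join (compl x) (compl y))) = x.
Proof. by case: HRA => _ [] _ []. Qed.

Lemma ra_join_compl x : join x (compl x) = top.
Proof.
(* Huntington's axiom splits both x + -x and 1' + -1' into the same four meets. *)
rewrite /ra_top; set w := ra_id o.
have hx := ra_huntington x (compl w); have hnx := ra_huntington (compl x) (compl w).
have hw := ra_huntington w (compl x); have hnw := ra_huntington (compl w) (compl x).
rewrite (ra_joinC (compl w) (compl x)) (ra_joinC (compl w) (compl (compl x))) in hw.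
rewrite (ra_joinC (compl (compl w)) (compl x)) in hnw.
rewrite (ra_joinC (compl (compl w)) (compl (compl x))) in hnw.
set a := compl (join (compl x) (compl w)) in hx hw.
set b := compl (join (compl x) (compl (compl w))) in hx hnw.
set c := compl (join (compl (compl x)) (compl w)) in hnx hw.
set d := compl (join (compl (compl x)) (compl (compl w))) in hnx hnw.
have -> : join x (compl x) = join (join a b) (join c d) by rewrite hx hnx.
have -> : join w (compl w) = join (join a c) (join b d) by rewrite hw hnw.
by rewrite -!ra_joinA (ra_joinA b c d) (ra_joinC b c) -(ra_joinA c b d).
Qed.

Lemma ra_complK x : compl (compl x) = x.
Proof.
have h1 := ra_huntington (compl (compl x)) (compl x).
rewrite (ra_joinC (compl (compl (compl x))) (compl (compl x))) ra_join_compl in h1.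
have h2 := ra_huntington x (compl (compl x)).
rewrite ra_join_compl (ra_joinC (compl x)) (ra_joinC (compl top)) in h2.
by rewrite -{1}h1 h2.
Qed.

Lemma ra_join0top : join zero top = top.
Proof. by have := ra_join_compl zero; rewrite /ra_zero ra_complK. Qed.

Lemma ra_join00 : join zero zero = zero.
Proof.
set e := join zero zero.
have h1 : join zero (compl e) = top.
  by have := ra_huntington top top; rewrite /ra_zero ra_join0top.
have et : join e top = top by rewrite /e -ra_joinA !ra_join0top.
have h2 : join zero (compl (join e zero)) = compl e.
  by have := ra_huntington (compl e) top; rewrite ra_complK et.
have h3 : join zero (compl (join zero e)) = top.
  by have := ra_huntington top (compl e); rewrite /ra_zero h1 ra_complK.
by rewrite -(ra_complK e) -h2 (ra_joinC e zero) h3.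
Qed.

Lemma ra_joinx0 x : join x zero = x.
Proof.
have h := ra_huntington x x; rewrite (ra_joinC (compl x) x) ra_join_compl in h.
by rewrite -{1}h (ra_joinC zero) -ra_joinA ra_join00 (ra_joinC _ zero).
Qed.

Lemma ra_joinxx x : join x x = x.
Proof.
have h := ra_huntington (compl x) (compl x).
rewrite (ra_joinC (compl (compl x))) ra_join_compl ra_complK ra_joinC ra_joinx0 in h.
by rewrite -(ra_complK (join x x)) h ra_complK.
Qed.

Lemma ra_leE a b : le a b <-> join a b = b.
Proof. by split=> [/eqP | /eqP]. Qed.

Lemma ra_le_refl a : le a a.
Proof. by apply/ra_leE; rewrite ra_joinxx. Qed.

Lemma ra_le_trans a b c : le a b -> le b c -> le a c.
Proof. by move=> /ra_leE h1 /ra_leE h2; apply/ra_leE; rewrite -h2 ra_joinA h1. Qed.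

Lemma ra_le_anti a b : le a b -> le b a -> a = b.
Proof. by move=> /ra_leE h1 /ra_leE h2; rewrite -h1 -{1}h2 ra_joinC. Qed.

Lemma ra_lex0 a : le a zero -> a = zero.
Proof.
by move=> h; apply: ra_le_anti h _; apply/ra_leE; rewrite ra_joinC ra_joinx0.
Qed.

Lemma ra_lex_top a : le a top.
Proof. by apply/ra_leE; rewrite -(ra_join_compl a) ra_joinA ra_joinxx. Qed.

Lemma ra_join_lub a b c : le a c -> le b c -> le (join a b) c.
Proof. by move=> /ra_leE h1 /ra_leE h2; apply/ra_leE; rewrite -ra_joinA h2 h1. Qed.

Lemma ra_compl_le a b : le a b -> le (compl b) (compl a).
Proof.
move=> /ra_leE h; have h2 := ra_huntington (compl a) (compl b).
rewrite !ra_complK h in h2.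
by apply/ra_leE; rewrite -h2 ra_joinA (ra_joinC (compl b)) -ra_joinA ra_joinxx.
Qed.

Lemma ra_meet_le_l a b : le (meet a b) a.
Proof.
have h := ra_huntington a (compl b); rewrite ra_complK in h.
apply/ra_leE; rewrite /ra_meet; move: h.
set p := compl (join (compl a) (compl b)); set q := compl (join (compl a) b) => h.
by rewrite -[in RHS]h -[X in join p X]h ra_joinA ra_joinxx.
Qed.

Lemma ra_meetC a b : meet a b = meet b a.
Proof. by rewrite /ra_meet ra_joinC. Qed.

Lemma ra_meet_le_r a b : le (meet a b) b.
Proof. by rewrite ra_meetC; apply: ra_meet_le_l. Qed.

Lemma ra_meet_glb a b c : le c a -> le c b -> le c (meet a b).
Proof.
move=> h1 h2; rewrite -(ra_complK c); apply: ra_compl_le.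
by apply: ra_join_lub; apply: ra_compl_le.
Qed.

Lemma ra_meet_compl a : meet a (compl a) = zero.
Proof. by rewrite /ra_meet ra_complK ra_joinC ra_join_compl. Qed.

Lemma ra_meet_eq0 a b : meet a b = zero -> le a (compl b).
Proof.
move=> h; have h2 := ra_huntington a b; rewrite /ra_meet in h.
rewrite h ra_joinx0 in h2; rewrite -h2.
by have := ra_meet_le_r a (compl b); rewrite /ra_meet ra_complK.
Qed.

Lemma ra_le_by_card (t f : T) :
  #|[pred s | le s t]| <= #|[pred s | le s f]| -> le f t -> le t f.
Proof.
move=> hc ft.
have sub : [pred s | le s f] \subset [pred s | le s t].
  by apply/subsetP => s; rewrite !inE => sf; apply: ra_le_trans sf ft.
have /esym/subsetP := geq_leqif (subset_leqif_card sub); rewrite hc.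
by move=> /(_ t); rewrite !inE; apply; apply: ra_le_refl.
Qed.

Lemma ra_atomP x y : ra_atom o x -> le y x -> y = zero \/ y = x.
Proof.
case/andP=> _ /forallP /(_ y); rewrite implybE => h yx; move: h; rewrite yx /=.
by case/orP=> /eqP ->; [left | right].
Qed.

Lemma ra_atom_neq0 x : ra_atom o x -> x <> zero.
Proof. by case/andP=> /eqP. Qed.

Lemma exists_atom_le a : a <> zero -> exists x, ra_atom o x /\ le x a.
Proof.
move=> a0; pose P t := (t != zero) && le t a.
have Pa : P a by apply/andP; split; [apply/eqP | apply: ra_le_refl].
case: (arg_minnP (fun t => #|[pred s | le s t]|) Pa) => t /andP [t0 ta] tmin.
exists t; split=> //; apply/andP; split=> //.
apply/forallP => y; apply/implyP => yt.
case: (eqVneq y zero) => [-> | y0] //=; apply/eqP.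
apply: (ra_le_anti yt); apply: (ra_le_by_card _ yt).
by apply: tmin; apply/andP; split=> //; apply: ra_le_trans yt ta.
Qed.

End BooleanReduct.

Section SubalgebraAtoms.
Variables (T : finType) (o : ra_ops T) (E : {pred T}).
Hypotheses (HRA : is_RA o) (Hsub : ra_subalg o E).
Local Notation le := (ra_le o).
Local Notation zero := (ra_zero o).
Local Notation catom := (catom_of o E).

Lemma sub_atomP e y : sub_atom o E e -> E y -> le y e -> y = zero \/ y = e.
Proof.
case/andP=> _ /forallP /(_ y) h Ey ye; move: h; rewrite Ey ye /=.
by case/orP=> /eqP ->; [left | right].
Qed.

Lemma sub_atom_mem e : sub_atom o E e -> E e.
Proof. by case/andP=> /andP []. Qed.

Lemma sub_datom_atom c : sub_datom o E c -> sub_atom o E c.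
Proof. by case/andP. Qed.

Lemma sub_datom_mem c : sub_datom o E c -> E c.
Proof. by move/sub_datom_atom/sub_atom_mem. Qed.

Lemma sub_comp x y : E x -> E y -> E (ra_comp o x y).
Proof. by case: Hsub => _ [_ [Ecomp _]]; apply: Ecomp. Qed.

Lemma sub_atom_neq0 e : sub_atom o E e -> e <> zero.
Proof. by case/andP=> /andP [] _ /eqP. Qed.

Lemma sub_meet x y : E x -> E y -> E (ra_meet o x y).
Proof.
case: Hsub => Ejoin [Ecompl _] Ex Ey.
by apply/Ecompl/Ejoin; apply: Ecompl.
Qed.

Lemma sub_compl x : E x -> E (ra_compl o x).
Proof. by case: Hsub => _ [Ecompl _]; apply: Ecompl. Qed.

Lemma sub_top : E (ra_top o).
Proof.
case: Hsub => Ejoin [Ecompl [_ [_ Eid]]].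
by apply: Ejoin => //; apply: Ecompl.
Qed.

(* The least element of E above the atom x is an atom of E. *)
Lemma sub_atom_above x : ra_atom o x -> exists e, sub_atom o E e /\ le x e.
Proof.
move=> ax; pose P t := E t && le x t.
have Ptop : P (ra_top o) by apply/andP; split; [apply: sub_top | apply: ra_lex_top].
case: (arg_minnP (fun t => #|[pred s | le s t]|) Ptop) => t /andP [Et xt] tmin.
exists t; split=> //.
have t0 : t != zero.
  by apply/eqP => t0; apply: (ra_atom_neq0 ax); apply: (ra_lex0 HRA); rewrite -t0.
apply/andP; split; first by apply/andP.
apply/forallP => y; apply/implyP => /andP [Ey yt].
case: (eqVneq y zero) => [-> | y0] //=; apply/eqP.
have minimal f : P f -> le f t -> le t f.
  by move=> Pf ft; apply: (ra_le_by_card HRA (tmin _ Pf) ft).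
case: (ra_atomP ax (ra_meet_le_l HRA x y)) => [xy0 | xy]; last first.
  apply: (ra_le_anti HRA yt); apply: minimal yt; apply/andP; split=> //.
  by rewrite -xy; apply: ra_meet_le_r.
(* Otherwise x <= t - y, so minimality gives t <= -y, whence y = y * -y = 0. *)
have ty : le t (ra_compl o y).
  apply: (ra_le_trans HRA _ (ra_meet_le_r HRA t _)); apply: minimal (ra_meet_le_l HRA _ _).
  apply/andP; split; first by apply: sub_meet => //; apply: sub_compl.
  by apply: ra_meet_glb => //; apply: ra_meet_eq0.
have := ra_meet_glb HRA (ra_le_refl HRA y) (ra_le_trans HRA yt ty).
by rewrite ra_meet_compl // => /(ra_lex0 HRA) /eqP; rewrite (negbTE y0).
Qed.

Lemma sub_atom_le e z f :
  sub_atom o E e -> z <> zero -> le z e -> le z f -> E f -> le e f.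
Proof.
move=> he z0 ze zf Ef.
case: (sub_atomP he (sub_meet (sub_atom_mem he) Ef) (ra_meet_le_l HRA e f)) => h.
  by exfalso; apply: z0; apply: (ra_lex0 HRA); rewrite -h; apply: ra_meet_glb.
by rewrite -h; apply: ra_meet_le_r.
Qed.

Lemma sub_atom_uniq a c z :
  sub_atom o E a -> sub_atom o E c -> z <> zero -> le z a -> le z c -> a = c.
Proof.
move=> ha hc z0 za zc; apply: (ra_le_anti HRA).
  exact: sub_atom_le ha z0 za zc (sub_atom_mem hc).
exact: sub_atom_le hc z0 zc za (sub_atom_mem ha).
Qed.

Lemma sub_atom_diversity e x :
  sub_atom o E e -> x <> zero -> le x e -> le x (ra_diversity o) ->
  le e (ra_diversity o).
Proof.
move=> he x0 xe xd; have Eid : E (ra_id o) by case: Hsub => _ [_ [_ []]].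
case: (sub_atomP he (sub_meet (sub_atom_mem he) Eid) (ra_meet_le_l HRA e _)) => h.
  exact: ra_meet_eq0.
exfalso; apply: x0; apply: (ra_lex0 HRA).
rewrite -(ra_meet_compl HRA (ra_id o)); apply: ra_meet_glb => //.
apply: (ra_le_trans HRA xe); rewrite -h; exact: ra_meet_le_r.
Qed.

Lemma catom_of_some x : ra_datom o x -> exists c, catom x = Some c.
Proof.
case/andP=> ax _; have [e [he xe]] := sub_atom_above ax.
rewrite /catom_of; case: pickP => [c _ | none]; first by exists c.
by have := none e; rewrite he xe.
Qed.

Lemma catom_ofP x c :
  ra_datom o x -> catom x = Some c <-> sub_datom o E c /\ le x c.
Proof.
move=> dx; have /andP [ax xd] := dx.
have [c' cx'] := catom_of_some dx.
have [hc' xc'] : sub_atom o E c' /\ le x c'.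
  by move: cx'; rewrite /catom_of; case: pickP => // c'' /andP [? ?] [<-].
rewrite cx'; split=> [[<-] | [/andP [hc _] xc]].
  split=> //; apply/andP; split=> //.
  exact: sub_atom_diversity hc' (ra_atom_neq0 ax) xc' xd.
by rewrite (sub_atom_uniq hc' hc (ra_atom_neq0 ax) xc' xc).
Qed.

End SubalgebraAtoms.

Section SymmetricComposition.
Variables (T : finType) (o : ra_ops T).
Hypotheses (HRA : is_RA o) (Hsym : ra_symmetric o).
Local Notation le := (ra_le o).
Local Notation comp := (ra_comp o).

Lemma ra_compC x y : comp x y = comp y x.
Proof.
case: HRA => _ [_ [_ [_ [_ [_ [_ [_ [conv_comp _]]]]]]]].
by rewrite -(Hsym (comp x y)) conv_comp !Hsym.
Qed.

Lemma ra_comp_le x x' y y' : le x x' -> le y y' -> le (comp x y) (comp x' y').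
Proof.
have compDl z1 z2 z : comp (ra_join o z1 z2) z = ra_join o (comp z1 z) (comp z2 z).
  by case: HRA => _ [_ [_ [_ [+ _]]]].
move=> /(ra_leE o) xx' /(ra_leE o) yy'.
apply: (ra_le_trans HRA (b := comp x' y)); apply/(ra_leE o).
  by rewrite -compDl xx'.
by rewrite (ra_compC x') (ra_compC x') -compDl yy'.
Qed.

End SymmetricComposition.

Section AtomsOfSetAlgebras.
Variables (T : finType) (o : ra_ops T).

Lemma Celt_ext (X Y : Celt o) : (forall w, X w <-> Y w) -> X = Y.
Proof.
move=> XY; apply: functional_extensionality => w.
exact: propositional_extensionality.
Qed.

Lemma C_sub_atom_witness S X : C_sub_atom o S X -> exists w, X w.
Proof.
case=> _ [X0 _]; apply: NNPP => noX; apply: X0; apply: Celt_ext => w.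
by split=> // Xw; apply: noX; exists w.
Qed.

Lemma C_sub_atom_eq S X Y w : C_sub_atom o S X -> S Y -> C_le Y X -> Y w -> Y = X.
Proof. by case=> _ [_ minX] SY YX Yw; case: (minX Y SY YX) => // Y0; rewrite Y0 in Yw. Qed.

Lemma C_sub_atomI S X w : S X -> X w ->
  (forall Y v, S Y -> C_le Y X -> Y v -> C_le X Y) -> C_sub_atom o S X.
Proof.
move=> SX Xw minX; split=> //; split; first by move=> X0; rewrite X0 in Xw.
move=> Y SY YX; have [[v Yv] | Y0] := classic (exists v, Y v).
  by right; apply: Celt_ext => u; split=> [/YX | /(minX Y v SY YX Yv)].
by left; apply: Celt_ext => u; split=> // Yu; apply: Y0; exists u.
Qed.

Lemma C_sub_atom_single S w :
  S (fun u => u = w) -> C_sub_atom o S (fun u => u = w).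
Proof.
move=> Sw; apply: (C_sub_atomI Sw (erefl w)) => Y v _ YX Yv u ->.
by rewrite -(YX v Yv).
Qed.

End AtomsOfSetAlgebras.

Section SaturatedSets.
Variables (T : finType) (o : ra_ops T) (E : {pred T}) (n : nat).
Hypotheses (HRA : is_RA o) (Hint : ra_integral o) (Hsym : ra_symmetric o).
Hypotheses (Hsub : ra_subalg o E) (HSE : special_extension o E).
Local Notation le := (ra_le o).
Local Notation comp := (ra_comp o).
Local Notation catom := (catom_of o E).
Local Notation cycle := (Ccycle o E).

Lemma datom_atom (x : datomA o) : ra_atom o (val x).
Proof. by case/andP: (valP x). Qed.

Lemma datom_le_sub_datom c y :
  sub_datom o E c -> ra_atom o y -> le y c -> ra_datom o y.
Proof.
case/andP=> _ cd ay yc; apply/andP; split=> //.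
exact: (ra_le_trans HRA yc cd).
Qed.

Lemma id_not_le_sub_datom c : sub_datom o E c -> ~ le (ra_id o) c.
Proof.
case/andP=> _ cd ic; apply: (ra_atom_neq0 Hint); apply: (ra_lex0 HRA).
rewrite -(ra_meet_compl HRA (ra_id o)).
exact: (ra_meet_glb HRA (ra_le_refl HRA _) (ra_le_trans HRA ic cd)).
Qed.

Lemma J_sub_datomP c w : sub_datom o E c -> J o c n w ->
  exists z k, w = Some (z, k) /\ le (val z) c /\ n <= k.
Proof.
move=> hc; case: w => [[z k] [zc kn] | /(id_not_le_sub_datom hc)] //.
by exists z, k.
Qed.

Lemma Ccycle_swap u v w : cycle u v w -> cycle v u w.
Proof. by rewrite /Ccycle; tauto. Qed.

Lemma Ccycle_1l v a : cycle None v (Some a) -> v = Some a.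
Proof.
by case: v => [[y j]|]; case: a => z k; rewrite /Ccycle /Cbase /=; intuition; subst.
Qed.

(* Condition (1) of a special extension: outside a single colour, whether a
   triple is a cycle depends only on the colours of its entries. *)
Lemma Cbase_recolor {x y z x' y' z' : datomA o} {i j k i' j' k' : nat} :
  Cbase o E (Some (x, i)) (Some (y, j)) (Some (z, k)) ->
  ~ (catom (val x) = catom (val y) /\ catom (val y) = catom (val z)) ->
  catom (val x') = catom (val x) -> catom (val y') = catom (val y) ->
  catom (val z') = catom (val z) ->
  Cbase o E (Some (x', i')) (Some (y', j')) (Some (z', k')).
Proof.
move=> [zxy _] hetero ex ey ez; split; last by rewrite ex ey ez.
have [P cx] := catom_of_some HRA Hsub (valP x).
have [Q cy] := catom_of_some HRA Hsub (valP y).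
have [R cz] := catom_of_some HRA Hsub (valP z).
have [hP xP] := (catom_ofP HRA Hsub _ (valP x)).1 cx.
have [hQ yQ] := (catom_ofP HRA Hsub _ (valP y)).1 cy.
have [hR zR] := (catom_ofP HRA Hsub _ (valP z)).1 cz.
have [_ x'P] := (catom_ofP HRA Hsub _ (valP x')).1 (etrans ex cx).
have [_ y'Q] := (catom_ofP HRA Hsub _ (valP y')).1 (etrans ey cy).
have [_ z'R] := (catom_ofP HRA Hsub _ (valP z')).1 (etrans ez cz).
have RPQ : le R (comp P Q).
  apply: (sub_atom_le HRA Hsub (sub_datom_atom hR) (ra_atom_neq0 (datom_atom z)) zR).
    exact: (ra_le_trans HRA zxy (ra_comp_le HRA Hsym xP yQ)).
  exact: (sub_comp Hsub (sub_datom_mem hP) (sub_datom_mem hQ)).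
apply: (ra_le_trans HRA z'R); case: HSE => SE1 _.
apply: SE1 hP hQ hR _ RPQ _ _ (datom_atom x') (datom_atom y') x'P y'Q.
by case=> ePQ eQR; apply: hetero; rewrite cx cy cz ePQ eQR.
Qed.

Lemma Ccycle_recolor {x y z x' y' z' : datomA o} {i j k i' j' k' : nat} :
  cycle (Some (x, i)) (Some (y, j)) (Some (z, k)) ->
  ~ (catom (val x) = catom (val y) /\ catom (val y) = catom (val z)) ->
  catom (val x') = catom (val x) -> catom (val y') = catom (val y) ->
  catom (val z') = catom (val z) ->
  cycle (Some (x', i')) (Some (y', j')) (Some (z', k')).
Proof.
move=> C hetero ex ey ez.
case: C => [h|[h|[h|[h|[h|h]]]]];
  [left | right; left | do 2 right; left | do 3 right; left
  | do 4 right; left | do 5 right];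
  apply: (Cbase_recolor h) => //; case=> e1 e2; apply: hetero; split; congruence.
Qed.

Lemma Cbase_mono {x y z : datomA o} {i j k : nat} c :
  Cbase o E (Some (x, i)) (Some (y, j)) (Some (z, k)) ->
  catom (val x) = Some c -> catom (val y) = Some c -> catom (val z) = Some c ->
  Tidx i j k /\ le c (comp c c).
Proof.
move=> [zxy T_] cx cy cz; split; first by apply: T_; rewrite cx cy cz.
have [/sub_datom_atom hc xc] := (catom_ofP HRA Hsub _ (valP x)).1 cx.
have [_ yc] := (catom_ofP HRA Hsub _ (valP y)).1 cy.
have [_ zc] := (catom_ofP HRA Hsub _ (valP z)).1 cz.
apply: (sub_atom_le HRA Hsub hc (ra_atom_neq0 (datom_atom z)) zc).
  exact: (ra_le_trans HRA zxy (ra_comp_le HRA Hsym xc yc)).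
exact: (sub_comp Hsub (sub_atom_mem hc) (sub_atom_mem hc)).
Qed.

Lemma Ccycle_mono {x y z : datomA o} {i j k : nat} c :
  cycle (Some (x, i)) (Some (y, j)) (Some (z, k)) ->
  catom (val x) = Some c -> catom (val y) = Some c -> catom (val z) = Some c ->
  Tidx i j k /\ le c (comp c c).
Proof.
move=> C cx cy cz.
case: C => [h|[h|[h|[h|[h|h]]]]];
  [ have [t cc] := Cbase_mono h cx cy cz
  | have [t cc] := Cbase_mono h cx cz cy
  | have [t cc] := Cbase_mono h cy cx cz
  | have [t cc] := Cbase_mono h cy cz cx
  | have [t cc] := Cbase_mono h cz cx cy
  | have [t cc] := Cbase_mono h cz cy cx ];
  by split=> //; move: t; rewrite /Tidx; lia.
Qed.

(* Condition (2) of a special extension supplies the missing side of a cycle of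
   colour c. *)
Lemma Ccycle_mono_partner c (x z : datomA o) i k :
  sub_datom o E c -> le c (comp c c) -> le (val x) c -> le (val z) c -> i <= k ->
  exists y : datomA o, le (val y) c /\ cycle (Some (x, i)) (Some (y, k)) (Some (z, k)).
Proof.
move=> hc cc xc zc ik; case: HSE => _ SE2.
have := SE2 c hc cc _ _ (datom_atom x) (datom_atom z) xc zc.
case/(exists_atom_le HRA) => y [ay ym].
have yc := ra_le_trans HRA ym (ra_meet_le_r HRA _ _).
exists (exist _ y (datom_le_sub_datom hc ay yc)); split=> //.
right; left; split; last by left.
exact: (ra_le_trans HRA ym (ra_meet_le_l HRA _ _)).
Qed.

Definition saturated (X : Celt o) : Prop :=
  forall c, sub_datom o E c -> forall w w', J o c n w -> J o c n w' -> X w -> X w'.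

Lemma saturated_comp_mono X Y c (x y z : datomA o) i j k :
  saturated X -> saturated Y -> sub_datom o E c -> le c (comp c c) ->
  le (val x) c -> le (val y) c -> le (val z) c -> n <= k -> n <= i \/ n <= j ->
  X (Some (x, i)) -> Y (Some (y, j)) -> C_comp o E X Y (Some (z, k)).
Proof.
move=> SX SY hc cc xc yc zc nk nij Xx Yy.
have [nj | jn] := leqP n j.
  have [[x0 i0] [X0 [x0c i0k]]] : exists u : datomA o * nat,
      X (Some u) /\ le (val u.1) c /\ u.2 <= k.
    have [ni | ni] := leqP n i; last by exists (x, i); do 2 split=> //=; lia.
    by exists (z, k); split=> //; apply: (SX c hc (Some (x, i))).
  have [y0 [y0c C0]] := Ccycle_mono_partner hc cc x0c zc i0k.
  exists (Some (x0, i0)), (Some (y0, k)); split=> //; split=> //.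
  exact: (SY c hc (Some (y, j))).
have ni : n <= i by case: nij => //; rewrite leqNgt jn.
have [x0 [x0c C0]] := Ccycle_mono_partner hc cc yc zc (ltnW (leq_trans jn nk)).
exists (Some (x0, k)), (Some (y, j)); split; first exact: (SX c hc (Some (x, i))).
by split=> //; apply: Ccycle_swap.
Qed.

Lemma saturated_comp X Y : saturated X -> saturated Y -> saturated (C_comp o E X Y).
Proof.
move=> SX SY c hc w w' hw hw' [u [v [Xu [Yv C]]]].
have [z [k [ew [zc kn]]]] := J_sub_datomP hc hw.
have [z' [k' [ew' [z'c k'n]]]] := J_sub_datomP hc hw'.
subst w w'.
case: u Xu C => [[x i] | ] Xu C; last first.
  rewrite (Ccycle_1l C) in Yv.
  exists None, (Some (z', k')); split=> //; split; last by left.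
  exact: (SY c hc _ _ hw hw').
case: v Yv C => [[y j] | ] Yv C; last first.
  rewrite (Ccycle_1l (Ccycle_swap C)) in Xu.
  exists (Some (z', k')), None; split; first exact: (SX c hc _ _ hw hw').
  by split=> //; apply: Ccycle_swap; left.
have cz : catom (val z) = Some c by apply/(catom_ofP HRA Hsub _ (valP z)).
have cz' : catom (val z') = Some c by apply/(catom_ofP HRA Hsub _ (valP z')).
have [[cx cy] | hetero] := classic (catom (val x) = Some c /\ catom (val y) = Some c).
  have [Tijk cc] := Ccycle_mono C cx cy cz.
  have [_ xc] := (catom_ofP HRA Hsub _ (valP x)).1 cx.
  have [_ yc] := (catom_ofP HRA Hsub _ (valP y)).1 cy.
  apply: (saturated_comp_mono SX SY hc cc xc yc z'c k'n _ Xu Yv).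
  by move: Tijk; rewrite /Tidx; lia.
exists (Some (x, i)), (Some (y, j)); split=> //; split=> //.
apply: (Ccycle_recolor C) => //; last by rewrite cz cz'.
by case=> e1 e2; apply: hetero; split; congruence.
Qed.

Lemma saturated_single w :
  (forall c, sub_datom o E c -> ~ J o c n w) -> saturated (fun u => u = w).
Proof. by move=> notJ c hc u u' Ju _ eu; subst u; case: (notJ c hc Ju). Qed.

Lemma saturated_id : saturated C_id.
Proof. by apply: saturated_single => c hc; apply: id_not_le_sub_datom. Qed.

Lemma saturated_small x i : i < n -> saturated (fun u => u = Some (x, i)).
Proof. by move=> lt_in; apply: saturated_single => c _ [_]; rewrite leqNgt lt_in. Qed.

Lemma saturated_J a : sub_datom o E a -> saturated (J o a n).
Proof.
move=> ha c hc w w' Jw Jw' Jaw.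
have [z [k [ew [zc _]]]] := J_sub_datomP hc Jw; subst w.
have [za _] := Jaw.
have -> // : a = c.
exact: (sub_atom_uniq HRA Hsub (sub_datom_atom ha) (sub_datom_atom hc)
  (ra_atom_neq0 (datom_atom z)) za zc).
Qed.

Lemma saturated_subalg : C_subalg o E saturated.
Proof.
split; first by move=> c _ w w' _ _.
split; first exact: saturated_id.
split.
  move=> X Y SX SY c hc w w' Jw Jw' [Xw | Yw].
    by left; apply: (SX c hc w).
  by right; apply: (SY c hc w).
split; first by move=> X SX c hc w w' Jw Jw' nXw Xw'; apply/nXw/(SX c hc w' w).
split; first by [].
exact: saturated_comp.
Qed.

Lemma saturated_atomP X : C_sub_atom o saturated X <-> Bn o E n X.
Proof.
split=> [atomX | ].
  have [SX _] := atomX.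
  have [[[x i] | ] Xw] := C_sub_atom_witness atomX; last first.
    have idX : C_le C_id X by move=> u ->.
    by left; rewrite (C_sub_atom_eq atomX saturated_id idX (erefl None)).
  have [lt_in | le_ni] := ltnP i n.
    right; left; exists x, i; split=> //.
    have xX : C_le (fun u => u = Some (x, i)) X by move=> u ->.
    by rewrite (C_sub_atom_eq atomX (saturated_small (x := x) lt_in) xX (erefl _)).
  have [c cx] := catom_of_some HRA Hsub (valP x).
  have [hc xc] := (catom_ofP HRA Hsub _ (valP x)).1 cx.
  have Jx : J o c n (Some (x, i)) by split.
  right; right; exists c; split=> //.
  have JX : C_le (J o c n) X by move=> u Ju; apply: (SX c hc _ _ Jx Ju Xw).
  by rewrite (C_sub_atom_eq atomX (saturated_J hc) JX Jx).
case=> [-> | [[x [i [lt_in ->]]] | [a [ha ->]]]].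
- exact: (C_sub_atom_single saturated_id).
- exact: (C_sub_atom_single (saturated_small (x := x) lt_in)).
- have [y [ay ya]] := exists_atom_le HRA (sub_atom_neq0 (sub_datom_atom ha)).
  pose y' : datomA o := exist _ y (datom_le_sub_datom ha ay ya).
  apply: (C_sub_atomI (saturated_J ha) (w := Some (y', n))); first by split.
  by move=> Y v SY YX Yv u Ju; apply: (SY a ha v u (YX v Yv) Ju Yv).
Qed.

End SaturatedSets.

Theorem lemma4 (T : finType) (o : ra_ops T) (E : {pred T}) :
  is_RA o -> ra_integral o -> ra_symmetric o ->
  ra_subalg o E -> sub_integral o E ->
  special_extension o E ->
  forall n : nat,
    exists S : Celt o -> Prop,
      C_subalg o E S /\ (forall X, C_sub_atom o S X <-> Bn o E n X).
Proof.
move=> HRA Hint Hsym Hsub _ HSE n; exists (saturated (o := o) E n).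
split; first exact: (saturated_subalg n HRA Hint Hsym Hsub HSE).
exact: (saturated_atomP n HRA Hint Hsub).
Qed.
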